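(* Consider logistic regression Bayesian networks on $m$ binary nodes as described in the context, for an ensemble $\mathcal{G}$ of DAGs on $[m]$ and parameter maps $\mathcal{P}(\mathcal{G})$. Then $$\Delta_{\max}:=\max_{i\in[m]}\max_{G\in\mathcal{G}}\sup_{\Theta\in\mathcal{P}(\mathcal{G})}\mathbb{E}_{X_{\pi_i(G)}}[\Delta(\eta_i,\eta_0)]\le \frac{w^1_{\max}}{2},\qquad \sup_{\Theta\in\mathcal{P}(\mathcal{G})}I(S;G\mid\Theta)\le\frac{n\,m\,w^1_{\max}}{2}.$$
   Context: Each $X_i\in\{0,1\}$. Given DAG $G$ and parameter map $\Theta$, node $i$ has a weight vector $w_i=\Theta_i(G)\in\mathbb{R}^{|\pi_i(G)|}$, and $X_i\mid X_{\pi_i(G)}\sim\mathrm{Bernoulli}(\sigma(\langle X_{\pi_i(G)},w_i\rangle))$ with $\sigma(t)=(1+e^{-t})^{-1}$; the reference (no-parent) distribution is $P_i(\varnothing,\Theta)=\mathrm{Bernoulli}(1/2)$. $w^1_{\max}:=\sup_{\Theta\in\mathcal{P}(\mathcal{G})}\max_{G\in\mathcal{G}}\max_{i}\|\Theta_i(G)\|_1$. The joint distribution is $\prod_iP_i(x_i\mid x_{\pi_i(G)})$; $S$ is $n$ i.i.d. samples from it; $I(S;G\mid\Theta)$ is the mutual information between $S$ and $G$ with $G$ uniform on $\mathcal{G}$ and $\Theta$ fixed. In the Bernoulli exponential family (sufficient statistic $x$), $\eta_i=\langle w_i,X_{\pi_i(G)}\rangle$ with expected sufficient statistic $\sigma(\eta_i)$,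 and $\eta_0=0$ with expected sufficient statistic $1/2$; $\Delta(\eta_1,\eta_2)=(\eta_1-\eta_2)(\tau(\eta_1)-\tau(\eta_2))$. $\mathbb{E}_{X_{\pi_i(G)}}$ is expectation over parents' values under the network's distribution. *)

From HB Require Import structures.
From mathcomp Require Import all_boot all_order all_algebra.
From mathcomp Require Import all_classical all_reals all_analysis.
Set Implicit Arguments. Unset Strict Implicit. Unset Printing Implicit Defensive.
Import Order.TTheory GRing.Theory Num.Theory.
Local Open Scope ring_scope.

(* A directed graph on the node set [m] = 'I_m, given by its parent sets:
   G i = pi_i(G), the set of parents of node i (edges j -> i for j \in G i). *)
Definition dag_t (m : nat) := {ffun 'I_m -> {set 'I_m}}.

(* G is acyclic: there is no edge j -> i with a directed path from i back to j
   (connect is reflexive, so self-loops are excluded as well). *)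
Definition is_dag (m : nat) (G : dag_t m) : bool :=
  [forall i : 'I_m, forall j : 'I_m,
      (j \in G i) ==> ~~ connect [rel a b | a \in G b] i j].

Definition config (m : nat) := {ffun 'I_m -> bool}.

(* A parameter map Theta: for every DAG G and node i, a weight vector
   Theta G i, whose coordinates indexed by the parents j \in pi_i(G) are the
   entries of w_i = Theta_i(G) (other coordinates are irrelevant). *)
Definition param (R : realType) (m : nat) := dag_t m -> 'I_m -> 'I_m -> R.

Definition sigmoid (R : realType) (t : R) : R := (1 + expR (- t))^-1.

Definition eta (R : realType) (m : nat) (Th : param R m) (G : dag_t m)
  (i : 'I_m) (x : config m) : R :=
  \sum_(j in G i) Th G i j * (x j)%:R.

(* Reference natural parameter eta_0 = 0 (Bernoulli(1/2)). *)
Definition eta0 (R : realType) : R := 0.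

Definition l1norm (R : realType) (m : nat) (Th : param R m) (G : dag_t m)
  (i : 'I_m) : R :=
  \sum_(j in G i) `|Th G i j|.

Definition node_prob (R : realType) (m : nat) (Th : param R m) (G : dag_t m)
  (i : 'I_m) (x : config m) : R :=
  if x i then sigmoid (eta Th G i x) else 1 - sigmoid (eta Th G i x).

Definition joint (R : realType) (m : nat) (Th : param R m) (G : dag_t m)
  (x : config m) : R :=
  \prod_(i < m) node_prob Th G i x.

Definition sample_prob (R : realType) (m n : nat) (Th : param R m)
  (G : dag_t m) (S : {ffun 'I_n -> config m}) : R :=
  \prod_(k < n) joint Th G (S k).

(* Delta(eta1, eta2) = (eta1 - eta2)(tau(eta1) - tau(eta2)), tau = sigmoid the
   expected sufficient statistic of the Bernoulli family (tau(0) = 1/2). *)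
Definition Delta (R : realType) (e1 e2 : R) : R :=
  (e1 - e2) * (sigmoid e1 - sigmoid e2).

Definition expected_Delta (R : realType) (m : nat) (Th : param R m)
  (G : dag_t m) (i : 'I_m) : R :=
  \sum_(x : config m) joint Th G x * Delta (eta Th G i x) (eta0 R).

Definition sample_marg (R : realType) (m n : nat) (Th : param R m)
  (Gs : {set dag_t m}) (S : {ffun 'I_n -> config m}) : R :=
  \sum_(G in Gs) #|Gs|%:R^-1 * sample_prob Th G S.

Definition mutual_info (R : realType) (m n : nat) (Th : param R m)
  (Gs : {set dag_t m}) : R :=
  \sum_(G in Gs) #|Gs|%:R^-1 *
    \sum_(S : {ffun 'I_n -> config m})
       sample_prob Th G S * ln (sample_prob Th G S / sample_marg Th Gs S).

Local Open Scope classical_set_scope.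
Local Open Scope ereal_scope.

Definition w1max (R : realType) (m : nat) (P : set (param R m))
  (Gs : {set dag_t m}) : \bar R :=
  ereal_sup [set y : \bar R | exists Th, P Th /\ exists G, G \in Gs /\
               exists i : 'I_m, y = (l1norm Th G i)%:E].

Definition Delta_max (R : realType) (m : nat) (P : set (param R m))
  (Gs : {set dag_t m}) : \bar R :=
  ereal_sup [set y : \bar R | exists Th, P Th /\ exists G, G \in Gs /\
               exists i : 'I_m, y = (expected_Delta Th G i)%:E].

Definition sup_MI (R : realType) (m n : nat) (P : set (param R m))
  (Gs : {set dag_t m}) : \bar R :=
  ereal_sup [set y : \bar R | exists Th, P Th /\ y = (mutual_info n Th Gs)%:E].

From Pilot Require Import Defs.
From HB Require Import structures.
From mathcomp Require Import all_boot all_order all_algebra.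
From mathcomp Require Import all_classical all_reals all_analysis.
From mathcomp Require Import ring lra.
Import Order.TTheory GRing.Theory Num.Theory.
Set Implicit Arguments. Unset Strict Implicit.
Local Open Scope ring_scope.

(* Since 0 < sigmoid < 1, Delta(eta, 0) = eta (sigmoid eta - 1/2) is at most
   |eta| / 2 <= ||w_i||_1 / 2 pointwise; averaging under the network law, which is
   a probability because G is acyclic (sum out one sink node at a time), gives
   the first bound.  For the second, I(S; G) = E_G KL(P_G || Pbar) is at most
   E_G KL(P_G || U) for the uniform law U (Gibbs), and 2 P_i(x_i | x_pa) =
   2 sigmoid(+-eta_i) <= exp(|eta_i| / 2), so ln (P_G(S) / U(S)) is at most
   n sum_i ||w_i||_1 / 2 <= n m w1max / 2. *)

Section Sigmoid.
Variable R : realType.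
Implicit Type t : R.

Lemma sigmoid_gt0 t : 0 < sigmoid t.
Proof. by rewrite /sigmoid invr_gt0 ltr_pwDl ?expR_gt0. Qed.

Lemma sigmoid_lt1 t : sigmoid t < 1.
Proof. by rewrite /sigmoid invf_lt1 ?ltrDl ?ltr_pwDl ?expR_gt0. Qed.

Lemma sigmoidN t : sigmoid (- t) = 1 - sigmoid t.
Proof.
rewrite /sigmoid opprK expRN; have := expR_gt0 t => et.
by field; rewrite !lt0r_neq0 //; lra.
Qed.

Lemma sigmoid0 : sigmoid (0 : R) = 2^-1.
Proof. by rewrite /sigmoid oppr0 expR0. Qed.

(* With a = e^(t/2): 2 sigmoid t = 2 a^2 / (a^2 + 1) <= a since a (a - 1)^2 >= 0. *)
Lemma sigmoid_le_expR_half t : 2 * sigmoid t <= expR (t / 2).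
Proof.
set a := expR (t / 2); have a_gt0 : 0 < a := expR_gt0 _.
have -> : sigmoid t = a ^+ 2 / (a ^+ 2 + 1).
  have e : expR (- t) = (a ^+ 2)^-1 by rewrite /a -expRM_natr divfK // expRN.
  by rewrite /sigmoid e; field; rewrite !lt0r_neq0 //; nra.
rewrite mulrA ler_pdivrMr; last by nra.
have : 0 <= a * (a - 1) ^+ 2 by rewrite mulr_ge0 ?sqr_ge0 ?ltW.
nra.
Qed.

Lemma Delta_eta0_le t : Delta t (eta0 R) <= `|t| / 2.
Proof.
rewrite /Delta /eta0 subr0 sigmoid0.
have : `|sigmoid t - 2^-1| <= 2^-1.
  by rewrite ler_norml; have := sigmoid_gt0 t; have := sigmoid_lt1 t; lra.
by move=> h; rewrite (le_trans (ler_norm _)) // normrM ler_wpM2l.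
Qed.

End Sigmoid.

Lemma ln_le_subr1 (R : realType) (x : R) : 0 < x -> ln x <= x - 1.
Proof. by move=> x_gt0; have := @le_ln1Dx R (x - 1); rewrite subrKC; apply; lra. Qed.

Section Gibbs.
Variables (R : realType) (T : finType).

Lemma gibbs_ineq (p q : T -> R) : (forall x, 0 < p x) -> (forall x, 0 < q x) ->
  \sum_x q x <= \sum_x p x -> 0 <= \sum_x p x * ln (p x / q x).
Proof.
move=> p_gt0 q_gt0 le_sum.
rewrite -subr_ge0 -sumrB in le_sum; apply: (le_trans le_sum); apply: ler_sum => x _.
have px_gt0 := p_gt0 x; have qp_gt0 : 0 < q x / p x by rewrite divr_gt0.
have -> : p x - q x = p x * (1 - q x / p x) by field; rewrite lt0r_neq0.
rewrite -[p x / q x]invf_div lnV ?posrE //.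
by apply: ler_wpM2l; [exact: ltW | have := ln_le_subr1 qp_gt0; lra].
Qed.

Variables (U : finType) (Gs : {set U}) (p : U -> T -> R).
Hypotheses (Gs_neq0 : Gs != finset.set0) (p_gt0 : forall G x, 0 < p G x)
  (p_sum1 : forall G, G \in Gs -> \sum_x p G x = 1).

Let w : R := #|Gs|%:R^-1.
Definition mixture x := \sum_(G in Gs) w * p G x.

Lemma mixture_weight_sum1 : \sum_(G in Gs) w = 1.
Proof. by rewrite sumr_const -mulr_natr mulVf // pnatr_eq0 -lt0n card_gt0. Qed.

Lemma mixture_gt0 x : 0 < mixture x.
Proof.
have [G0 G0s] := set0Pn _ Gs_neq0.
have w_gt0 : 0 < w by rewrite invr_gt0 ltr0n card_gt0.
rewrite /mixture (bigD1 G0) //= ltr_pwDl ?mulr_gt0 ?sumr_ge0 // => G _.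
by rewrite mulr_ge0 ?ltW.
Qed.

Lemma mixture_sum1 : \sum_x mixture x = 1.
Proof.
rewrite /mixture exchange_big /= -[RHS]mixture_weight_sum1.
by apply: eq_bigr => G Gs_G; rewrite -mulr_sumr p_sum1 ?mulr1.
Qed.

(* Mutual information is an average divergence; replacing the mixture by any
   sub-probability reference r can only increase it (Gibbs). *)
Lemma mixture_info_le (r : T -> R) (K : R) :
  (forall x, 0 < r x) -> \sum_x r x <= 1 ->
  (forall G x, G \in Gs -> ln (p G x / r x) <= K) ->
  \sum_(G in Gs) w * \sum_x p G x * ln (p G x / mixture x) <= K.
Proof.
move=> r_gt0 r_sum le_K.
have split_ln G x : ln (p G x / mixture x) = ln (p G x / r x) - ln (mixture x / r x).
  rewrite -ln_div ?posrE ?divr_gt0 ?mixture_gt0 //.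
  by congr ln; field; rewrite !lt0r_neq0 ?mixture_gt0.
have -> : \sum_(G in Gs) w * \sum_x p G x * ln (p G x / mixture x) =
    \sum_(G in Gs) w * \sum_x p G x * ln (p G x / r x)
    - \sum_x mixture x * ln (mixture x / r x).
  have average (f : T -> R) :
      \sum_x mixture x * f x = \sum_(G in Gs) w * \sum_x p G x * f x.
    under eq_bigr do rewrite mulr_suml.
    rewrite exchange_big; apply: eq_bigr => G _; rewrite mulr_sumr.
    by apply: eq_bigr => x _; rewrite mulrA.
  rewrite average -sumrB; apply: eq_bigr => G _; rewrite -mulrBr -sumrB.
  by congr (_ * _); apply: eq_bigr => x _; rewrite split_ln mulrBr.
have gibbs : 0 <= \sum_x mixture x * ln (mixture x / r x).
  by apply: gibbs_ineq => //; [exact: mixture_gt0 | rewrite mixture_sum1].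
suff : \sum_(G in Gs) w * \sum_x p G x * ln (p G x / r x) <= K by lra.
rewrite -[K]mul1r -mixture_weight_sum1 mulr_suml; apply: ler_sum => G Gs_G.
apply: ler_wpM2l; first by rewrite invr_ge0.
rewrite -[K]mul1r -(p_sum1 Gs_G) mulr_suml; apply: ler_sum => x _.
by apply: ler_wpM2l; [exact: ltW | exact: le_K].
Qed.

End Gibbs.

Section DagKernel.
Variables (m : nat) (G : dag_t m).
Hypothesis G_dag : is_dag G.

Let parent_rel : rel 'I_m := [rel a b | a \in G b].

Lemma dag_parent_not_descendant i j : j \in G i -> ~~ connect parent_rel i j.
Proof. by move/forallP: G_dag => /(_ i) /forallP /(_ j) /implyP. Qed.

Lemma dag_irrefl i : i \notin G i.
Proof. by apply/negP => /dag_parent_not_descendant; rewrite connect0. Qed.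

(* A node of U with the most ancestors has no child in U. *)
Lemma dag_sink (U : {set 'I_m}) : U != finset.set0 ->
  exists2 s, s \in U & forall j, j \in U -> s \notin G j.
Proof.
case/set0Pn=> s0 U_s0; pose ancestors k := #|[set a | connect parent_rel a k]|.
have [s U_s s_max] := @arg_maxnP _ s0 (mem U) ancestors U_s0.
exists s => // j U_j; apply/negP => s_j.
have := s_max j U_j; rewrite /= leqNgt => /negP; apply; apply: proper_card.
apply/properP; split.
  apply/fintype.subsetP => a; rewrite !inE => a_s.
  exact: connect_trans a_s (connect1 _).
by exists j; rewrite !inE ?connect0 ?dag_parent_not_descendant.
Qed.

Definition toggle (s : 'I_m) (x : config m) : config m := [ffun j => x j (+) (j == s)].

Lemma toggleK s : involutive (toggle s).
Proof. by move=> x; apply/ffunP => j; rewrite !ffunE addbK. Qed.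

Variables (R : numFieldType) (k : 'I_m -> config m -> R).
Hypotheses (k_local : forall i (x y : config m),
    (forall j, j \in G i -> x j = y j) -> x i = y i -> k i x = k i y)
  (k_toggle : forall i x, k i (toggle i x) + k i x = 1).

Lemma kernel_toggle_nonparent s i x : i != s -> s \notin G i -> k i (toggle s x) = k i x.
Proof.
move=> i_s s_Gi; apply: k_local => [j Gi_j|]; rewrite ffunE ?(negbTE i_s) ?addbF //.
by case: eqP => [js|_]; [rewrite -js Gi_j in s_Gi | rewrite addbF].
Qed.

Let mass (U : {set 'I_m}) := \sum_x \prod_(i in U) k i x.

(* Pairing x with toggle s x sums out the sink s, on which no other factor depends. *)
Lemma mass_remove_sink (U : {set 'I_m}) s :
  s \in U -> (forall j, j \in U -> s \notin G j) -> mass U *+ 2 = mass (U :\ s).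
Proof.
move=> U_s s_sink; pose rest x := \prod_(i in U :\ s) k i x.
have rest_toggle x : rest (toggle s x) = rest x.
  apply: eq_bigr => i; rewrite !inE => /andP [i_s U_i].
  exact: kernel_toggle_nonparent i_s (s_sink i U_i).
have massE : mass U = \sum_x k s x * rest x.
  apply: eq_bigr => x _; rewrite (bigD1 s U_s); congr (_ * _).
  by apply: eq_bigl => i; rewrite !inE andbC.
rewrite mulr2n {1}massE (reindex_inj (inv_inj (toggleK s))) massE -big_split.
by apply: eq_bigr => x _ /=; rewrite rest_toggle -mulrDl k_toggle mul1r.
Qed.

Lemma mass_card (U : {set 'I_m}) : mass U * 2 ^+ #|U| = 2 ^+ m.
Proof.
move Ec: #|U| => c; elim: c U Ec => [|c IH] U cardU.
  move/eqP: cardU; rewrite cards_eq0 => /eqP ->; rewrite expr0 mulr1 /mass.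
  under eq_bigr do rewrite big_set0.
  by rewrite sumr_const card_ffun card_bool card_ord -natrX.
have [s U_s s_sink] : exists2 s, s \in U & forall j, j \in U -> s \notin G j.
  by apply: dag_sink; rewrite -card_gt0 cardU.
have card_Us : #|U :\ s| = c by move: cardU; rewrite (cardsD1 s U) U_s add1n => -[].
by rewrite exprS mulrA mulr_natr (mass_remove_sink U_s s_sink) IH.
Qed.

Lemma sum_prod_kernel : \sum_x \prod_i k i x = 1.
Proof.
have := mass_card [set: 'I_m]; rewrite cardsT card_ord.
have two_m_neq0 : (2 : R) ^+ m != 0 by rewrite expf_neq0 ?pnatr_eq0.
move/(congr1 (fun y => y / 2 ^+ m)); rewrite mulfK // divff // => mass_setT.
rewrite -[RHS]mass_setT.
by apply: eq_bigr => x _; apply: eq_bigl => i; rewrite finset.in_setT.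
Qed.

End DagKernel.

Section LogisticNetwork.
Variables (R : realType) (m : nat) (Th : param R m).
Implicit Types (G : dag_t m) (i : 'I_m) (x : config m).

Definition total_l1norm G := \sum_i l1norm Th G i.
Local Notation L := total_l1norm.

Lemma eta_norm_le G i x : `|Defs.eta Th G i x| <= l1norm Th G i.
Proof.
rewrite (le_trans (ler_norm_sum _ _ _)) // ler_sum // => j _.
by rewrite normrM ler_piMr //; case: (x j); rewrite ?normr1 ?normr0.
Qed.

Lemma node_prob_gt0 G i x : 0 < node_prob Th G i x.
Proof. by rewrite /node_prob; case: (x i); rewrite -?sigmoidN sigmoid_gt0. Qed.

Lemma node_prob_le_expR G i x :
  2 * node_prob Th G i x <= expR (`|Defs.eta Th G i x| / 2).
Proof.
rewrite /node_prob; case: (x i); [|rewrite -sigmoidN];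
  rewrite (le_trans (sigmoid_le_expR_half _)) // ler_expR ler_pM2r //.
- exact: ler_norm.
- by rewrite -normrN ler_norm.
Qed.

Lemma joint_gt0 G x : 0 < joint Th G x.
Proof. by rewrite prodr_gt0 // => i _; apply: node_prob_gt0. Qed.

Lemma joint_sum1 G : is_dag G -> \sum_x joint Th G x = 1.
Proof.
move=> G_dag; apply: (sum_prod_kernel G_dag) => [i x y eq_pa eq_i | i x].
  by rewrite /node_prob eq_i /Defs.eta; under eq_bigr => j /eq_pa -> do [].
have eta_toggle : Defs.eta Th G i (toggle i x) = Defs.eta Th G i x.
  apply: eq_bigr => j Gi_j; rewrite ffunE; case: eqP => [ji|_]; last by rewrite addbF.
  by have := dag_irrefl G_dag i; rewrite -{1}ji Gi_j.
rewrite /node_prob ffunE eqxx addbT eta_toggle; case: (x i) => /=; lra.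
Qed.

Lemma joint_le_expR G x : joint Th G x * 2 ^+ m <= expR (L G / 2).
Proof.
have -> : joint Th G x * 2 ^+ m = \prod_i (2 * node_prob Th G i x).
  by rewrite big_split /= prodr_const card_ord mulrC.
rewrite /L mulr_suml expR_sum ler_prod // => i _.
rewrite mulr_ge0 ?(ltW (node_prob_gt0 _ _ _)) //= (le_trans (node_prob_le_expR _ _ _)) //.
by rewrite ler_expR ler_pM2r ?eta_norm_le.
Qed.

Lemma expected_Delta_le G i : is_dag G -> expected_Delta Th G i <= l1norm Th G i / 2.
Proof.
move=> G_dag; rewrite -[X in _ <= X]mul1r -[X in X * _](joint_sum1 G_dag) mulr_suml.
rewrite ler_sum // => x _; rewrite ler_wpM2l ?(ltW (joint_gt0 _ _)) //.
by rewrite (le_trans (Delta_eta0_le _)) // ler_pM2r ?eta_norm_le.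
Qed.

Variable n : nat.
Local Notation sample := {ffun 'I_n -> config m}.
Implicit Type S : sample.

Lemma sample_prob_gt0 G S : 0 < sample_prob Th G S.
Proof. by rewrite prodr_gt0 // => k _; apply: joint_gt0. Qed.

Lemma sample_prob_sum1 G : is_dag G -> \sum_(S : sample) sample_prob Th G S = 1.
Proof.
move=> G_dag; rewrite /sample_prob -(bigA_distr_bigA (fun _ x => joint Th G x)) /=.
by rewrite (joint_sum1 G_dag) big1.
Qed.

Lemma sample_prob_le_expR G S :
  sample_prob Th G S * (2 ^+ m) ^+ n <= expR (n%:R * (L G / 2)).
Proof.
have -> : sample_prob Th G S * (2 ^+ m) ^+ n = \prod_k (joint Th G (S k) * 2 ^+ m).
  by rewrite big_split /= prodr_const card_ord.
have -> : n%:R * (L G / 2) = \sum_(k < n) L G / 2 by rewrite sumr_const card_ord mulr_natl.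
rewrite expR_sum ler_prod // => k _.
by rewrite mulr_ge0 ?(ltW (joint_gt0 _ _)) ?joint_le_expR.
Qed.

Lemma mutual_info_le (Gs : {set dag_t m}) (K : R) :
  Gs != finset.set0 -> (forall G, G \in Gs -> is_dag G) ->
  (forall G, G \in Gs -> n%:R * (L G / 2) <= K) -> mutual_info n Th Gs <= K.
Proof.
move=> Gs_neq0 Gs_dag le_K; have c_gt0 : 0 < (2 ^+ m) ^+ n :> R by rewrite !exprn_gt0.
apply: (@mixture_info_le _ _ _ _ (sample_prob Th) Gs_neq0 _ _
  (fun=> ((2 ^+ m) ^+ n)^-1)) => //.
- exact: sample_prob_gt0.
- by move=> G /Gs_dag; apply: sample_prob_sum1.
- rewrite sumr_const card_ffun card_ffun card_bool !card_ord.
  by rewrite -(mulr_natr (_ ^- n)) !natrX mulVf ?lt0r_neq0.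
move=> G S G_in; rewrite invrK (le_trans _ (le_K G G_in)) // -ler_expR lnK.
  exact: sample_prob_le_expR.
by rewrite posrE mulr_gt0 ?sample_prob_gt0.
Qed.

Lemma mutual_info_le_l1norm (Gs : {set dag_t m}) (M : R) :
  Gs != finset.set0 -> (forall G, G \in Gs -> is_dag G) ->
  (forall G i, G \in Gs -> l1norm Th G i <= M) ->
  mutual_info n Th Gs <= (n * m)%:R * M / 2.
Proof.
move=> Gs_neq0 Gs_dag le_M; apply: mutual_info_le => // G Gs_G.
have le_L : L G <= m%:R * M.
  rewrite mulr_natl -[in X in _ <= X](card_ord m) -sumr_const.
  by rewrite ler_sum // => i _; apply: le_M.
by rewrite natrM -!mulrA ler_wpM2l // mulrA ler_pM2r.
Qed.
End LogisticNetwork.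

Unset Implicit Arguments.
Local Open Scope classical_set_scope.
Local Open Scope ereal_scope.

Theorem lemma10 (R : realType) (m n : nat) (Gs : {set dag_t m})
  (P : set (param R m)) :
  Gs != finset.set0 ->
  (forall G, G \in Gs -> is_dag G) ->
  Delta_max P Gs <= w1max P Gs * (2^-1)%:E /\
  sup_MI n P Gs <= (n * m)%:R%:E * w1max P Gs * (2^-1)%:E.
Proof.
move=> Gs_neq0 Gs_dag.
have le_w1max Th G i : P Th -> G \in Gs -> (l1norm Th G i)%:E <= w1max P Gs.
  move=> PTh Gs_G; apply: ereal_sup_ubound.
  by exists Th; split => //; exists G; split => //; exists i.
split.
  apply: ge_ereal_sup => _ [Th [PTh [G [Gs_G [i ->]]]]].
  apply: le_trans (lee_wpmul2r _ (le_w1max Th G i PTh Gs_G)); rewrite ?lee_fin //.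
  by rewrite expected_Delta_le ?Gs_dag.
apply: ge_ereal_sup => _ [Th [PTh ->]].
have [nm0 | nm_neq0] := eqVneq (n * m)%N 0%N.
  rewrite nm0 !mul0e lee_fin; apply: mutual_info_le => // G _.
  move/eqP: nm0; rewrite muln_eq0 => /orP [/eqP -> | /eqP m0]; first by rewrite mul0r.
  rewrite /total_l1norm big1 ?mul0r ?mulr0 // => i.
  by move: (ltn_ord i); rewrite [X in (_ < X)%N]m0.
have [m_gt0 n_gt0] : (0 < m)%N /\ (0 < n)%N.
  by move: nm_neq0; rewrite muln_eq0 negb_or -!lt0n andbC => /andP.
have [G0 Gs_G0] := set0Pn _ Gs_neq0.
have := le_w1max Th G0 (Ordinal m_gt0) PTh Gs_G0.
case: (w1max P Gs) le_w1max => [r | | ] le_w1max l1norm_le.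
- rewrite -!EFinM lee_fin mutual_info_le_l1norm // => G i Gs_G.
  by rewrite -lee_fin le_w1max.
- by rewrite gt0_muley ?gt0_mulye ?leey // lte_fin ?invr_gt0 // ltr0n lt0n.
- by move: l1norm_le; rewrite leeNy_eq.
Qed.
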